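(* Let $q\in\mathrm{prob}(\{0,1\}^2)$. The set $E:=\{(\pi_1,\chi^{(2)}_{1|1}):(\pi,\chi)\in\Theta_2,\ \mu(\pi,\chi)=q\}$ is nonempty and equals the set of all $(\mathrm{Pr},\mathrm{Se}_2)\in[0,1]^2$ satisfying $\mathrm{Pr}-q_{+0}\le\mathrm{Pr}\,\mathrm{Se}_2\le q_{+1}$.
   Context: A subscript $+$ denotes summation over the replaced index: $q_{+0}=q_{00}+q_{10}$, $q_{+1}=q_{01}+q_{11}$. $\mathrm{prob}(\mathcal{X})$ is the set of probability densities on a finite set $\mathcal{X}$; $\mathrm{markov}(\mathcal{X},\mathcal{Y})$ the set of maps $(x,y)\mapsto p_{y|x}$ with $p_{\cdot|x}\in\mathrm{prob}(\mathcal{Y})$. $\Theta_2:=\mathrm{prob}(\{0,1\})\times\mathrm{markov}(\{0,1\},\{0,1\}^2)$, $\mu(\pi,\chi)_j:=\sum_{i=0}^1\pi_i\chi_{j|i}$ for $j\in\{0,1\}^2$, $\chi^{(2)}_{\iota|i}:=\chi_{0\iota|i}+\chi_{1\iota|i}$. *)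

(* Indices {0,1} are encoded as bool (0 = false, 1 = true);
   {0,1}^2 as bool * bool, where the pair (a, b) encodes the string "ab". *)
From mathcomp Require Import all_boot all_order all_algebra.
Set Implicit Arguments. Unset Strict Implicit. Unset Printing Implicit Defensive.
Import Order.TTheory GRing.Theory Num.Theory.
Local Open Scope ring_scope.

Section Defs.
Variable R : realFieldType.

Definition is_prob (X : finType) (p : X -> R) : Prop :=
  (forall x, 0 <= p x) /\ \sum_(x : X) p x = 1.

Definition is_markov (X Y : finType) (k : X -> Y -> R) : Prop :=
  forall x, is_prob (k x).

Definition in_Theta2 (pi : bool -> R) (chi : bool -> bool * bool -> R) : Prop :=
  is_prob pi /\ is_markov chi.

Definition mu (pi : bool -> R) (chi : bool -> bool * bool -> R)
  (j : bool * bool) : R := \sum_(i : bool) pi i * chi i j.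

Definition chi2 (chi : bool -> bool * bool -> R) (iota i : bool) : R :=
  chi i (false, iota) + chi i (true, iota).

Definition qplus (q : bool * bool -> R) (b : bool) : R :=
  q (false, b) + q (true, b).

Definition E_set (q : bool * bool -> R) (x : R * R) : Prop :=
  exists pi chi, in_Theta2 pi chi /\ (forall j, mu pi chi j = q j) /\
    x = (pi true, chi2 chi true true).
End Defs.

(* A point (Pr, Se2) of E comes from a decomposition q = Pr c1 + (1 - Pr) c0 into probability
   densities on {0,1}^2, where c1 has column marginal (1 - Se2, Se2).  Necessity: the column
   sums of the two summands are nonnegative, so Pr Se2 <= q_{+1} and Pr (1 - Se2) <= q_{+0}.
   Sufficiency: split each column of q proportionally, c1(a,b) := s_b q_{ab} / q_{+b} with
   s = (1 - Se2, Se2); the two inequalities say exactly that Pr c1 <= q, and the remainder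
   q - Pr c1, renormalised, is c0. *)
From mathcomp Require Import all_boot all_order all_algebra.
From mathcomp Require Import lra.
Import Order.TTheory GRing.Theory Num.Theory.
Local Open Scope ring_scope.

Section Lemma7.
Variable R : realFieldType.
Implicit Types (q : bool * bool -> R) (pi : bool -> R) (chi : bool -> bool * bool -> R).

Lemma sum_bool_pair (f : bool * bool -> R) :
  \sum_(j : bool * bool) f j = qplus f false + qplus f true.
Proof.
rewrite (eq_bigr (fun j => f (j.1, j.2))); last by case.
by rewrite -(pair_bigA _ (fun a b => f (a, b))) /= !big_bool /= /qplus; lra.
Qed.

Lemma prob_le1 {X : finType} {p : X -> R} : is_prob p -> forall x, 0 <= p x <= 1.
Proof.
move=> [p_ge0 <-] x; rewrite p_ge0 /=.
by rewrite (bigD1 x) //= lerDl sumr_ge0.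
Qed.

Lemma qplus_mu pi chi b : qplus (mu pi chi) b = \sum_(i : bool) pi i * chi2 chi b i.
Proof. by rewrite /qplus /mu /chi2 -big_split; apply: eq_bigr => i _; rewrite mulrDr. Qed.

Lemma chi2_sum {chi} {i} : is_prob (chi i) -> chi2 chi false i + chi2 chi true i = 1.
Proof. by move=> [_]; rewrite sum_bool_pair /qplus /chi2; lra. Qed.

Lemma E_set_bounds q Pr Se2 :
  E_set q (Pr, Se2) ->
  [/\ 0 <= Pr <= 1, 0 <= Se2 <= 1,
      Pr - qplus q false <= Pr * Se2 & Pr * Se2 <= qplus q true].
Proof.
case=> pi [chi [[pi_prob chi_markov] [mu_q [-> ->]]]].
have chi2_ge0 b i : 0 <= chi2 chi b i.
  by have [ge0 _] := chi_markov i; rewrite addr_ge0.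
have col_ge b : pi true * chi2 chi b true <= qplus q b.
  rewrite /qplus -!mu_q -/(qplus _ b) qplus_mu big_bool /= lerDl.
  by have [ge0 _] := pi_prob; rewrite mulr_ge0.
have /andP[Pr_ge0 Pr_le1] := prob_le1 pi_prob true.
have Se2_le1 : chi2 chi true true <= 1.
  by have := chi2_sum (chi_markov true); have := chi2_ge0 false true; lra.
split; rewrite ?chi2_ge0 ?Pr_ge0 // ?col_ge //.
have := col_ge false; have := chi2_sum (chi_markov true); nra.
Qed.

Lemma prob_mixture_split {X : finType} {q c : X -> R} {p : R} :
  is_prob q -> is_prob c -> 0 <= p <= 1 -> (forall x, p * c x <= q x) ->
  exists c0 : X -> R, is_prob c0 /\ forall x, q x = p * c x + (1 - p) * c0 x.
Proof.
move=> [q_ge0 q_sum] [c_ge0 c_sum] /andP[p_ge0 p_le1] pc_le_q.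
have [p1|p_neq1] := eqVneq p 1.
  exists q; split=> [|x]; first by [].
  have c_le_q y : 0 <= q y - c y by rewrite subr_ge0 -[c y]mul1r -p1.
  have /psumr_eq0P q_eq_c : \sum_y (q y - c y) = 0 by rewrite sumrB q_sum c_sum subrr.
  by have := q_eq_c (fun y _ => c_le_q y) x isT; rewrite p1; lra.
have p_lt1 : 0 < 1 - p by rewrite subr_gt0 lt_neqAle p_neq1.
exists (fun x => (q x - p * c x) / (1 - p)); split=> [|x]; last first.
  by rewrite [(1 - p) * _]mulrC divfK ?lt0r_neq0 //; lra.
split=> [x|]; first by rewrite divr_ge0 ?subr_ge0 // ltW.
rewrite -mulr_suml sumrB -mulr_sumr q_sum c_sum mulr1 divff //.
exact: lt0r_neq0.
Qed.

(* Column-wise rescaling of q to column sums s; an empty column of q gets its mass s_b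
   at (0, b), so that col_cond q s is a density whenever s is. *)
Definition col_cond q (s : bool -> R) (j : bool * bool) : R :=
  if qplus q j.2 == 0 then (~~ j.1)%:R * s j.2 else s j.2 * q j / qplus q j.2.

Section ColCond.
Variables (q : bool * bool -> R) (s : bool -> R).
Hypotheses (q_ge0 : forall j, 0 <= q j) (s_ge0 : forall b, 0 <= s b).

Lemma col_cond_ge0 j : 0 <= col_cond q s j.
Proof.
rewrite /col_cond; case: ifP => _; first by rewrite mulr_ge0.
by rewrite divr_ge0 ?mulr_ge0 // /qplus addr_ge0.
Qed.

Lemma qplus_col_cond b : qplus (col_cond q s) b = s b.
Proof.
rewrite /qplus /col_cond /=; case: ifP => [_|/negbT q_neq0].
  by rewrite mul1r mul0r addr0.
by rewrite -mulrDl -mulrDr -/(qplus q b) -mulrA divff // mulr1.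
Qed.

Lemma col_cond_le p j : 0 <= p -> p * s j.2 <= qplus q j.2 -> p * col_cond q s j <= q j.
Proof.
move: j => [a b] /= p_ge0 ps_le; rewrite /col_cond /=.
have qplus_ge0 : 0 <= qplus q b by rewrite addr_ge0.
case: ifP => [/eqP q0 | /negbT q_neq0].
  have ps0 : p * s b = 0 by apply/eqP; rewrite eq_le -{1}q0 ps_le mulr_ge0.
  by rewrite mulrCA ps0 mulr0.
have qplus_gt0 : 0 < qplus q b by rewrite lt0r q_neq0.
by rewrite !mulrA ler_pdivrMr // [_ * qplus q b]mulrC ler_wpM2r.
Qed.
End ColCond.

Lemma E_set_of_bounds q Pr Se2 :
  is_prob q ->
  [/\ 0 <= Pr <= 1, 0 <= Se2 <= 1,
      Pr - qplus q false <= Pr * Se2 & Pr * Se2 <= qplus q true] ->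
  E_set q (Pr, Se2).
Proof.
move=> q_prob [Pr01 /andP[Se2_ge0 Se2_le1] col0 col1].
have [q_ge0 _] := q_prob; have /andP[Pr_ge0 Pr_le1] := Pr01.
pose s b := if b then Se2 else 1 - Se2.
have s_ge0 b : 0 <= s b by case: b => /=; lra.
pose c1 := col_cond q s.
have c1_prob : is_prob c1.
  split; first exact: col_cond_ge0.
  by rewrite sum_bool_pair !qplus_col_cond //= addrNK.
have Prc1_le_q j : Pr * c1 j <= q j.
  by apply: col_cond_le => //; case: j => a [] /=; lra.
have [c0 [c0_prob q_mix]] := prob_mixture_split q_prob c1_prob Pr01 Prc1_le_q.
exists (fun i => if i then Pr else 1 - Pr), (fun i => if i then c1 else c0).
split; [split | split].
- by split=> [[]|]; rewrite ?big_bool /=; lra.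
- by case.
- by move=> j; rewrite /mu big_bool /= q_mix addrC.
- by rewrite /chi2 /= -/(qplus c1 true) qplus_col_cond.
Qed.

End Lemma7.

Theorem lemma7 (R : realFieldType) (q : bool * bool -> R) :
  is_prob q ->
  (exists x : R * R, E_set q x) /\
  (forall Pr Se2 : R,
     E_set q (Pr, Se2) <->
     [/\ 0 <= Pr <= 1, 0 <= Se2 <= 1,
         Pr - qplus q false <= Pr * Se2 & Pr * Se2 <= qplus q true]).
Proof.
move=> q_prob; split; last by split; [exact: E_set_bounds | exact: E_set_of_bounds].
have [q_ge0 _] := q_prob.
have qplus_ge0 b : 0 <= qplus q b by rewrite addr_ge0.
exists (0, 0); apply: E_set_of_bounds => //.
by rewrite mul0r sub0r oppr_le0 !qplus_ge0 lexx ler01.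
Qed.
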